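(* Let $B\ge 2$ and $\eta\in\mathbb{N}$. Then $\mathcal{H}_B(\gamma_B(\eta+1))\le\gamma_B(\eta)+4(B-1)^2$.
   Context: Fix an integer base $B \geq 2$. Every integer $x>0$ is written uniquely as $x=\sum_{i=0}^{L(x)-1} x_i B^i$ with digits $0 \le x_i \le B-1$ and $x_{L(x)-1}\neq 0$. Define $\mathcal{H}_B(x)=\sum_{i=0}^{L(x)-1} x_i^2$, $\mathcal{H}_B(0)=0$, $\mathcal{H}_B^0(x)=x$, $\mathcal{H}_B^{n}=\mathcal{H}_B\circ\mathcal{H}_B^{n-1}$. A positive integer $x$ is happy if $\mathcal{H}_B^n(x)=1$ for some $n\in\mathbb{N}$; its height is $\eta_B(x)=\min\{\alpha\in\mathbb{N}:\mathcal{H}_B^\alpha(x)=1\}$. For $n\in\mathbb{N}$, $\gamma_B(n)$ denotes the smallest happy number $x\ge 1$ with $\eta_B(x)=n$. *)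

From mathcomp Require Import all_boot.
Set Implicit Arguments. Unset Strict Implicit. Unset Printing Implicit Defensive.

(* Digit i of x in base B is (x %/ B^i) %% B.  For B >= 2, B^x > x, so all
   nonzero digits of x have index < x; hence summing over i < x covers all
   digits (and gives H_B(0) = 0). *)
Definition digit (B x i : nat) : nat := (x %/ B ^ i) %% B.

Definition HB (B x : nat) : nat := \sum_(i < x) (digit B x i) ^ 2.

Definition HBiter (B n x : nat) : nat := iter n (HB B) x.

Definition happy (B x : nat) : Prop := 0 < x /\ exists n, HBiter B n x = 1.

Definition has_height (B x n : nat) : Prop :=
  happy B x /\ HBiter B n x = 1 /\ (forall m, m < n -> HBiter B m x <> 1).

Definition is_gamma (B n x : nat) : Prop :=
  has_height B x n /\ (forall y, has_height B y n -> x <= y).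

From mathcomp Require Import all_boot all_algebra.
From mathcomp Require Import zify ring.
Set Implicit Arguments. Unset Strict Implicit. Unset Printing Implicit Defensive.
Import GRing.Theory Num.Theory.

(* Write s = B - 1 for the largest base-B digit.  Let g0 = gamma_B(eta) and
   g0 = q s^2 + r with r < s^2.  By Lagrange's four-square theorem,
   r = a^2 + b^2 + c^2 + d^2 with every a, b, c, d < s, so the number y whose
   base-B digits are a, b, c, d followed by q digits s satisfies H_B(y) = g0
   and y < B^(q+4).  If eta > 0 then y has height eta + 1 (for eta = 0 take
   y = B instead), hence g1 = gamma_B(eta+1) <= y < B^(q+4).  A number with at
   most q + 4 digits has H_B at most (q + 4) s^2 <= g0 + 4 s^2. *)

Definition sum4 (n : nat) : Prop :=
  exists a b c d : nat, n = a ^ 2 + b ^ 2 + c ^ 2 + d ^ 2.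

Lemma PoszX2 (n : nat) : Posz (n ^ 2) = (Posz n ^+ 2)%R.
Proof. by rewrite PoszM -expr2. Qed.

Section IntegerIdentities.
Local Open Scope ring_scope.

Lemma Posz_absz_sqr (u : int) : Posz (`|u| ^ 2)%N = u ^+ 2.
Proof. by rewrite -abszX gez0_abs // exprn_even_ge0. Qed.

Lemma sum4_int (n : nat) (a b c d : int) :
  Posz n = a ^+ 2 + b ^+ 2 + c ^+ 2 + d ^+ 2 -> sum4 n.
Proof.
move=> En; exists `|a|%N, `|b|%N, `|c|%N, `|d|%N; apply/eqP.
by rewrite -eqz_nat En !PoszD !Posz_absz_sqr.
Qed.

(* Euler's four-square identity: sums of four squares are closed under
   products. *)
Lemma sum4M (m n : nat) : sum4 m -> sum4 n -> sum4 (m * n).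
Proof.
case=> a [b [c [d ->]]] [e [f [g [h ->]]]].
apply: (@sum4_int _ (a%:Z * e + b%:Z * f + c%:Z * g + d%:Z * h)
                    (a%:Z * f - b%:Z * e + c%:Z * h - d%:Z * g)
                    (a%:Z * g - b%:Z * h - c%:Z * e + d%:Z * f)
                    (a%:Z * h + b%:Z * g - c%:Z * f - d%:Z * e)).
rewrite PoszM !PoszD !PoszX2; ring.
Qed.

(* Descent step: if m P = a^2+b^2+c^2+d^2 and (e,f,g,h) is congruent to
   (a,b,c,d) modulo m with e^2+f^2+g^2+h^2 = m, then dividing Euler's product
   of the two representations by m^2 shows that P is a sum of four squares. *)
Lemma sum4_descent (m P : nat) (a b c d e f g h : int) : (0 < m)%N ->
  a ^+ 2 + b ^+ 2 + c ^+ 2 + d ^+ 2 = Posz (m * P) ->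
  e ^+ 2 + f ^+ 2 + g ^+ 2 + h ^+ 2 = Posz m ->
  (m %| a - e)%Z -> (m %| b - f)%Z -> (m %| c - g)%Z -> (m %| d - h)%Z ->
  sum4 P.
Proof.
move=> m_gt0 Eabcd Eefgh /dvdzP[x1 Ha] /dvdzP[x2 Hb] /dvdzP[x3 Hc] /dvdzP[x4 Hd].
have {Ha}Ea : a = e + x1 * m by rewrite -Ha; ring.
have {Hb}Eb : b = f + x2 * m by rewrite -Hb; ring.
have {Hc}Ec : c = g + x3 * m by rewrite -Hc; ring.
have {Hd}Ed : d = h + x4 * m by rewrite -Hd; ring.
apply: (@sum4_int P (1 + (e * x1 + f * x2 + g * x3 + h * x4))
          (x1 * f - x2 * e + x3 * h - x4 * g) (x1 * g - x2 * h - x3 * e + x4 * f)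
          (x1 * h + x2 * g - x3 * f - x4 * e)).
have m_neq0 : Posz m != 0 by rewrite eqz_nat -lt0n.
apply: (mulfI (mulf_neq0 m_neq0 m_neq0)).
rewrite -mulrA -[Posz m * Posz P]PoszM -Eabcd; subst a b c d; rewrite -Eefgh; ring.
Qed.

(* If x^2 + y^2 = -1, C = -(x A + y B) and D = x B - y A modulo p, then
   C^2 + D^2 = -(A^2 + B^2), i.e. p divides A^2 + B^2 + C^2 + D^2. *)
Lemma thue_congr (p x y A B C D : int) :
  (p %| x ^+ 2 + y ^+ 2 + 1)%Z -> (p %| C + x * A + y * B)%Z ->
  (p %| D + y * A - x * B)%Z -> (p %| A ^+ 2 + B ^+ 2 + C ^+ 2 + D ^+ 2)%Z.
Proof.
move=> /dvdzP[w Hw] /dvdzP[s Hs] /dvdzP[t Ht].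
have {Hs}-> : C = s * p - x * A - y * B by rewrite -Hs; ring.
have {Ht}-> : D = t * p - y * A + x * B by rewrite -Ht; ring.
apply/dvdzP; exists ((A ^+ 2 + B ^+ 2) * w + p * s ^+ 2 - 2 * s * (x * A + y * B)
                     + p * t ^+ 2 - 2 * t * (y * A - x * B)).
apply/eqP; rewrite -subr_eq0; apply/eqP.
transitivity ((A ^+ 2 + B ^+ 2) * ((x ^+ 2 + y ^+ 2 + 1) - w * p)); first ring.
by rewrite Hw subrr mulr0.
Qed.

End IntegerIdentities.

Lemma small_residue (m a : nat) : 0 < m <= 3 ->
  exists e : int, (m %| (a%:Z - e)%R)%Z /\ (e ^+ 2)%R = Posz (~~ (m %| a)).
Proof.
case/andP=> m_gt0 m_le3; have Ea := divn_eq a m; set q := a %/ m in Ea.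
have r_lt := ltn_pmod a m_gt0.
rewrite /dvdn; case: (a %% m) r_lt Ea => [|[|[|r]]] r_lt -> /=; last lia.
- by exists 0%R; split; [apply/dvdzP; exists (Posz q); rewrite subr0 addn0 PoszM | ].
- by exists 1%R; split; [apply/dvdzP; exists (Posz q); rewrite PoszD PoszM addrK | ].
- have -> : m = 3 by lia.
  exists (-1)%R; split; last by rewrite sqrrN expr1n.
  by apply/dvdzP; exists (Posz (q + 1)); rewrite PoszD PoszM; ring.
Qed.

Lemma sum4_small_multiple (m P a b c d : nat) : 0 < m <= 3 ->
  a ^ 2 + b ^ 2 + c ^ 2 + d ^ 2 = m * P ->
  ~~ (m %| a) + ~~ (m %| b) + ~~ (m %| c) + ~~ (m %| d) = m -> sum4 P.
Proof.
move=> m_small Esum Ecount.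
have [ea [ha Ea]] := small_residue a m_small.
have [eb [hb Eb]] := small_residue b m_small.
have [ec [hc Ec]] := small_residue c m_small.
have [ed [hd Ed]] := small_residue d m_small.
apply: (@sum4_descent m P a b c d ea eb ec ed) => //.
- by case/andP: m_small.
- by rewrite -Esum !PoszD !PoszX2.
- by rewrite Ea Eb Ec Ed -!PoszD Ecount.
Qed.

Lemma sqr_mod4 (a : nat) : exists k, a ^ 2 = 4 * k + odd a.
Proof.
case: (odd a) (odd_double_half a) => /= ha; rewrite -{1}ha -muln2.
- by exists (a./2 ^ 2 + a./2); ring.
- by exists (a./2 ^ 2); ring.
Qed.

Lemma sqr_mod3 (a : nat) : exists k, a ^ 2 = 3 * k + ~~ (3 %| a).
Proof.
have := divn_eq a 3; rewrite /dvdn.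
case: (a %% 3) (ltn_pmod a (isT : 0 < 3)) => [|[|[|//]]] _ -> /=.
- by exists (3 * (a %/ 3) ^ 2); ring.
- by exists (3 * (a %/ 3) ^ 2 + 2 * (a %/ 3)); ring.
- by exists (3 * (a %/ 3) ^ 2 + 4 * (a %/ 3) + 1); ring.
Qed.

(* If 2 p is a sum of four squares with p odd, then comparing modulo 4
   exactly two of them are odd, so p is a sum of four squares. *)
Lemma sum4_half (p a b c d : nat) :
  odd p -> a ^ 2 + b ^ 2 + c ^ 2 + d ^ 2 = 2 * p -> sum4 p.
Proof.
move=> p_odd Esum; apply: (@sum4_small_multiple 2 p a b c d) => //.
have [ka Ea] := sqr_mod4 a; have [kb Eb] := sqr_mod4 b.
have [kc Ec] := sqr_mod4 c; have [kd Ed] := sqr_mod4 d.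
have := odd_double_half p; rewrite p_odd -addnn => Ep.
rewrite !dvdn2 !negbK Ea Eb Ec Ed -{}Ep in Esum *; lia.
Qed.

(* If 3 p is a sum of four squares with 3 not dividing p, then exactly three
   of them are prime to 3 (if none were, 9 would divide 3 p). *)
Lemma sum4_third (p a b c d : nat) :
  ~~ (3 %| p) -> a ^ 2 + b ^ 2 + c ^ 2 + d ^ 2 = 3 * p -> sum4 p.
Proof.
move=> p_ndvd Esum; apply: (@sum4_small_multiple 3 p a b c d) => //.
have [ka Ea] := sqr_mod3 a; have [kb Eb] := sqr_mod3 b.
have [kc Ec] := sqr_mod3 c; have [kd Ed] := sqr_mod3 d.
have [/eqP|//] : ~~ (3 %| a) + ~~ (3 %| b) + ~~ (3 %| c) + ~~ (3 %| d) = 0 \/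
                 ~~ (3 %| a) + ~~ (3 %| b) + ~~ (3 %| c) + ~~ (3 %| d) = 3.
  by move: Esum; rewrite Ea Eb Ec Ed; lia.
rewrite !addn_eq0 !eqb0 !negbK => /andP[/andP[/andP[ha hb] hc] hd].
have sqr9 (u : nat) : 3 %| u -> 3 * 3 %| u ^ 2 by move=> h; rewrite -mulnn dvdn_mul.
have : 3 * 3 %| 3 * p by rewrite -Esum !dvdn_add ?sqr9.
by rewrite dvdn_pmul2l // (negbTE p_ndvd).
Qed.

Lemma sqr_mod_inj (p x y : nat) : prime p -> x + x < p -> y + y < p ->
  x ^ 2 = y ^ 2 %[mod p] -> x = y.
Proof.
move=> p_prime; wlog le_yx : x y / y <= x.
  by move=> W hx hy E; case: (leqP y x) => [|/ltnW] h; [|symmetry]; apply: W.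
move=> hx hy /eqP; rewrite eqn_mod_dvd ?leq_exp2r // subn_sqr.
rewrite Euclid_dvdM // => /orP[] /dvdn_leq; lia.
Qed.

(* -1 is a sum of two squares modulo an odd prime p: the (p+1)/2 values
   x^2 and the (p+1)/2 values -1 - y^2 cannot be distinct modulo p. *)
Lemma minus_one_sum2 (p : nat) : prime p -> odd p ->
  exists x y, p %| x ^ 2 + y ^ 2 + 1.
Proof.
move=> p_prime p_odd; have p_gt0 := prime_gt0 p_prime.
have pred_lt : p.-1 < p by rewrite ltn_predL.
set h := p.+1./2.
have hh : h + h = p.+1 by move: (odd_double_half p.+1); rewrite /= p_odd -addnn.
pose F (u : 'I_h + 'I_h) : 'I_p :=
  match u with
  | inl x => Ordinal (ltn_pmod (x ^ 2) p_gt0)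
  | inr y => Ordinal (leq_ltn_trans (leq_subr (y ^ 2 %% p) p.-1) pred_lt)
  end.
have : ~~ injectiveb F.
  apply/injectiveP => /leq_card; rewrite card_sum !card_ord; lia.
have sum2 (u v : nat) : u ^ 2 %% p = p.-1 - v ^ 2 %% p -> p %| u ^ 2 + v ^ 2 + 1.
  move=> E; apply/dvdnP; exists (u ^ 2 %/ p + v ^ 2 %/ p + 1).
  have := ltn_pmod (v ^ 2) p_gt0; have := divn_eq (u ^ 2) p.
  have := divn_eq (v ^ 2) p; lia.
have small (u : 'I_h) : u + u < p by have := ltn_ord u; lia.
have sqr_inj (u v : 'I_h) : u ^ 2 = v ^ 2 %[mod p] -> u = v.
  by move=> E; apply/val_inj/(sqr_mod_inj p_prime (small u) (small v)).
case/injectivePn => [[u|u] [[v|v] neq_uv /(congr1 val) /= E]].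
- by case/eqP: neq_uv; rewrite (sqr_inj u v).
- by exists u, v; apply: sum2.
- by exists v, u; apply: sum2.
- case/eqP: neq_uv; rewrite (sqr_inj u v) //.
  by have := ltn_pmod (u ^ 2) p_gt0; have := ltn_pmod (v ^ 2) p_gt0; lia.
Qed.

Lemma isqrt (n : nat) : exists k, k ^ 2 <= n < k.+1 ^ 2.
Proof.
elim: n => [|n [k /andP[k_le k_lt]]]; first by exists 0.
case: (ltnP n.+1 (k.+1 ^ 2)) => h; first by exists k; rewrite h andbT; lia.
by exists k.+1; rewrite h /=; move: k_lt h; rewrite -!mulnn; nia.
Qed.

Lemma dvdz_of_eqmod (p m n : nat) : m = n %[mod p] -> (p %| (m%:Z - n%:Z)%R)%Z.
Proof. by move=> E; rewrite -eqz_mod_dvd !modz_nat E. Qed.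

Lemma absz_diff_le (u v k : nat) : u <= k -> v <= k -> `|(u%:Z - v%:Z)%R| <= k.
Proof. by case: (leqP u v) => [|/ltnW] h; [rewrite distnEr | rewrite distnEl]; lia. Qed.

(* Thue's pigeonhole argument: the (k+1)^4 > p^2 quadruples of [0, k] cannot
   have pairwise distinct values modulo p of the two linear forms
   C + x A + y B and D + y A - x B (computed in nat with -x replaced by
   (p-1) x), and the difference of two colliding quadruples is a nonzero small
   common zero of both forms. *)
Lemma thue_pigeonhole (p k x y : nat) : 0 < p -> p < k.+1 ^ 2 ->
  exists A B C D : int,
    [/\ [/\ `|A| <= k, `|B| <= k, `|C| <= k & `|D| <= k],
        ~~ [&& A == 0%R, B == 0%R, C == 0%R & D == 0%R],
        (p %| (C + x%:Z * A + y%:Z * B)%R)%Z & (p %| (D + y%:Z * A - x%:Z * B)%R)%Z].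
Proof.
move=> p_gt0 p_lt; set I := 'I_k.+1.
pose F (t : I * I * I * I) : 'I_p * 'I_p :=
  let: (a, b, c, d) := t in
  (Ordinal (ltn_pmod (c + x * a + y * b) p_gt0),
   Ordinal (ltn_pmod (d + y * a + p.-1 * x * b) p_gt0)).
have : ~~ injectiveb F.
  apply/injectiveP => /leq_card; rewrite !card_prod !card_ord.
  by move: p_lt; rewrite -!mulnn; nia.
case/injectivePn => [[[[a1 b1] c1] d1] [[[[a2 b2] c2] d2] neq EF]].
have /dvdz_of_eqmod/dvdzP[s Es] := congr1 (fun w => val w.1) EF.
have /dvdz_of_eqmod/dvdzP[t Et] := congr1 (fun w => val w.2) EF.
exists (a1%:Z - a2%:Z)%R, (b1%:Z - b2%:Z)%R, (c1%:Z - c2%:Z)%R, (d1%:Z - d2%:Z)%R.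
split.
- by split; apply: absz_diff_le; rewrite -ltnS.
- apply: contra neq; rewrite !subr_eq0 !eqz_nat.
  by case/and4P=> /eqP/val_inj-> /eqP/val_inj-> /eqP/val_inj-> /eqP/val_inj->.
- by apply/dvdzP; exists s; rewrite -Es !PoszD !PoszM; ring.
- apply/dvdzP; exists (t - x%:Z * (b1%:Z - b2%:Z))%R.
  by rewrite mulrBl -Et !PoszD !PoszM (predn_int p_gt0); ring.
Qed.

Lemma prime_not_square (p k : nat) : prime p -> k ^ 2 != p.
Proof.
move=> p_prime; apply/eqP => Ek; have p_gt1 := prime_gt1 p_prime.
have k_dvd : k %| p by rewrite -Ek -mulnn dvdn_mulr.
case/primeP: p_prime => _ /(_ k k_dvd) /orP[] /eqP Ek'; move: Ek p_gt1;
  rewrite Ek' -mulnn; nia.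
Qed.

(* For a prime p with p | x^2 + y^2 + 1, some multiple m p with 0 < m < 4 is
   a sum of four squares: take the small solution of Thue's argument with
   k = floor(sqrt p), whose sum of squares is positive, divisible by p and
   at most 4 k^2 < 4 p. *)
Lemma small_multiple_sum4 (p x y : nat) : prime p -> p %| x ^ 2 + y ^ 2 + 1 ->
  exists a b c d m, a ^ 2 + b ^ 2 + c ^ 2 + d ^ 2 = m * p /\ 0 < m < 4.
Proof.
move=> p_prime hxy; have p_gt0 := prime_gt0 p_prime.
have [k /andP[k_le k_lt]] := isqrt p.
have k2_lt : k ^ 2 < p by rewrite ltn_neqAle k_le prime_not_square.
have [A [B [C [D [[hA hB hC hD] nz hC' hD']]]]] :=
  thue_pigeonhole x y p_gt0 k_lt.
have hxy' : (p %| (x%:Z ^+ 2 + y%:Z ^+ 2 + 1)%R)%Z.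
  by rewrite -!PoszX2 -!PoszD dvdzE.
have := thue_congr hxy' hC' hD'.
rewrite -!Posz_absz_sqr -!PoszD dvdzE /= => S_dvd.
set S := `|A| ^ 2 + `|B| ^ 2 + `|C| ^ 2 + `|D| ^ 2 in S_dvd *.
have S_pos : 0 < S.
  rewrite lt0n; apply: contra nz.
  by rewrite !addn_eq0 -!mulnn !muln_eq0 !orbb !absz_eq0 -!andbA.
have S_lt : S < 4 * p.
  apply: (@leq_ltn_trans (k ^ 2 + k ^ 2 + k ^ 2 + k ^ 2)).
    by rewrite !leq_add ?leq_sqr.
  by move: k2_lt; clear; lia.
exists `|A|, `|B|, `|C|, `|D|, (S %/ p); rewrite divnK //; split => //.
move: (divnK S_dvd) S_pos S_lt; move: (S %/ p) => m <-.
by rewrite muln_gt0 ltn_pmul2r // => /andP[-> _].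
Qed.

Lemma sum4_prime (p : nat) : prime p -> sum4 p.
Proof.
move=> p_prime; case: (even_prime p_prime) => [->|p_odd]; first by exists 1, 1, 0, 0.
case: (eqVneq p 3) => [->|p_neq3]; first by exists 1, 1, 1, 0.
have [x [y hxy]] := minus_one_sum2 p_prime p_odd.
have [a [b [c [d [m [Esum /andP[m_gt0 m_lt4]]]]]]] := small_multiple_sum4 p_prime hxy.
case: m Esum m_gt0 m_lt4 => [|[|[|[|//]]]] Esum // _ _.
- by exists a, b, c, d; rewrite Esum mul1n.
- exact: sum4_half p_odd Esum.
- by apply: sum4_third Esum; rewrite dvdn_prime2 // eq_sym.
Qed.

Theorem lagrange_four_squares (n : nat) : sum4 n.
Proof.
elim/ltn_ind: n => -[|[|n]] IH; [by exists 0, 0, 0, 0 | by exists 1, 0, 0, 0 |].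
have pdiv_p := pdiv_prime (isT : 1 < n.+2).
rewrite -(divnK (pdiv_dvd n.+2)) mulnC.
apply: sum4M; first exact: sum4_prime.
by apply: IH; apply: ltn_Pdiv; rewrite ?prime_gt1.
Qed.

Fixpoint from_digits (B : nat) (l : seq nat) : nat :=
  if l is d :: l' then d + B * from_digits B l' else 0.

Section Digits.
Variable B : nat.
Hypothesis B_gt1 : 1 < B.

Let B_gt0 : 0 < B. Proof. exact: ltnW. Qed.

Lemma digit_cons (d v i : nat) : d < B ->
  digit B (d + B * v) i = if i is i'.+1 then digit B v i' else d.
Proof.
move=> d_lt; rewrite /digit; case: i => [|i].
  by rewrite expn0 divn1 addnC mulnC modnMDl modn_small.
by rewrite expnS divnMA addnC mulnC divnMDl // (divn_small d_lt) addn0.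
Qed.

Lemma from_digits_lt (l : seq nat) : all (fun d => d < B) l ->
  from_digits B l < B ^ size l.
Proof.
elim: l => [|d l IH] //= /andP[d_lt /IH lt_l].
apply: (@leq_trans (B * (from_digits B l).+1)).
  by rewrite mulnS ltn_add2r.
by rewrite expnS leq_mul2l lt_l orbT.
Qed.

Lemma digit_small (x i : nat) : x < B ^ i -> digit B x i = 0.
Proof. by move=> x_lt; rewrite /digit divn_small ?mod0n. Qed.

Lemma HB_sum (x L : nat) : x < B ^ L -> HB B x = \sum_(i < L) digit B x i ^ 2.
Proof.
have trunc (N M : nat) : x < B ^ N -> N <= M ->
    \sum_(i < M) digit B x i ^ 2 = \sum_(i < N) digit B x i ^ 2.
  move=> x_lt le_NM; rewrite -!(big_mkord xpredT (fun i => digit B x i ^ 2)).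
  rewrite (big_cat_nat (leq0n N) le_NM) /=.
  rewrite [X in _ + X]big1_seq ?addn0 // => i /andP[_].
  rewrite mem_index_iota => /andP[le_Ni _]; rewrite digit_small //.
  exact: leq_trans x_lt (leq_pexp2l B_gt0 le_Ni).
rewrite /HB => x_lt; case: (leqP x L) => [le_xL | /ltnW le_Lx].
  by rewrite (trunc x L) // ltn_expl.
by rewrite (trunc L x).
Qed.

Lemma HB_from_digits (l : seq nat) : all (fun d => d < B) l ->
  HB B (from_digits B l) = sumn [seq d ^ 2 | d <- l].
Proof.
move=> l_digits; rewrite (HB_sum (from_digits_lt l_digits)).
elim: l l_digits => [|d l IH] /=; first by rewrite big_ord0.
case/andP=> d_lt /IH <-; rewrite big_ord_recl digit_cons //.
by congr (_ + _); apply: eq_bigr => i _; rewrite digit_cons.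
Qed.

Lemma HB_le (x L : nat) : x < B ^ L -> HB B x <= L * (B - 1) ^ 2.
Proof.
move=> x_lt; rewrite (HB_sum x_lt) -[L in L * _]card_ord -sum_nat_const.
by apply: leq_sum => i _; rewrite leq_sqr -ltnS subn1 prednK // ltn_pmod.
Qed.

(* 1 and B are written 1 and 10 in base B. *)
Lemma HB_one : HB B 1 = 1.
Proof. by have := @HB_from_digits [:: 1]; rewrite /= muln0 B_gt1 => ->. Qed.

Lemma HB_base : HB B B = 1.
Proof.
by have := @HB_from_digits [:: 0; 1]; rewrite /= muln0 muln1 B_gt0 B_gt1 => ->.
Qed.

(* Every g is H_B of some number with at most g %/ (B-1)^2 + 4 digits: take
   g %/ (B-1)^2 digits B - 1 and four digits whose squares sum to the
   remainder g %% (B-1)^2 (Lagrange). *)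
Lemma HB_preimage (g : nat) :
  exists y, HB B y = g /\ y < B ^ (g %/ (B - 1) ^ 2 + 4).
Proof.
set s := B - 1; set q := g %/ s ^ 2.
have s2_gt0 : 0 < s ^ 2 by rewrite expn_gt0 subn_gt0 B_gt1.
have r_lt := ltn_pmod g s2_gt0.
have [a [b [c [d Er]]]] := lagrange_four_squares (g %% s ^ 2).
have digit_of (u : nat) : u ^ 2 <= g %% s ^ 2 -> u < B.
  move=> /leq_ltn_trans/(_ r_lt); rewrite ltn_sqr => /leq_trans; apply.
  exact: leq_subr.
set l := [:: a; b; c; d] ++ nseq q s.
have l_digits : all (fun d => d < B) l.
  have s_lt : s < B by rewrite /s subn1 ltn_predL ltnW.
  by rewrite all_cat all_nseq s_lt orbT /= !digit_of // Er; lia.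
have size_l : size l = q + 4 by rewrite size_cat size_nseq addnC.
exists (from_digits B l); split; last by rewrite -size_l from_digits_lt.
rewrite HB_from_digits // map_cat sumn_cat map_nseq sumn_nseq /= -/q.
by rewrite (divn_eq g (s ^ 2)) -/q Er; lia.
Qed.

Lemma has_height_HB (g y n : nat) :
  has_height B g n.+1 -> HB B y = g -> has_height B y n.+2.
Proof.
move=> [[g_gt0 _] [g_iter g_min]] Ey.
have iter_y (m : nat) : HBiter B m.+1 y = HBiter B m g by rewrite /HBiter iterSr Ey.
split; last split.
- split; last by exists n.+2; rewrite iter_y.
  by rewrite lt0n; apply: contraTneq g_gt0 => y0; rewrite -Ey y0 /HB big_ord0.
- by rewrite iter_y.
- case=> [|m] m_lt; last by rewrite iter_y; apply: g_min.
  rewrite /HBiter /= => y1; apply: (g_min 0) => //.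
  by rewrite /HBiter /= -Ey y1 HB_one.
Qed.

Lemma has_height_base : has_height B B 1.
Proof.
have HB_iter1 : HBiter B 1 B = 1 by rewrite /HBiter /= HB_base.
split; first by split; last exists 1.
split=> // -[|//] _; rewrite /HBiter /= => B1.
by move: B_gt1; rewrite B1.
Qed.

Lemma taller_witness (g n : nat) : has_height B g n ->
  exists y, has_height B y n.+1 /\ y < B ^ (g %/ (B - 1) ^ 2 + 4).
Proof.
case: n => [|n] g_height.
  exists B; split; first exact: has_height_base.
  by rewrite -{1}(expn1 B) ltn_exp2l // addnC.
have [y [Ey y_lt]] := HB_preimage g.
by exists y; split; first exact: has_height_HB g_height Ey.
Qed.

End Digits.

Theorem lemma2p6 (B eta g0 g1 : nat) :
  2 <= B ->
  is_gamma B eta g0 ->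
  is_gamma B eta.+1 g1 ->
  HB B g1 <= g0 + 4 * (B - 1) ^ 2.
Proof.
move=> B_ge2 [g0_height _] [_ g1_min].
have [y [y_height y_lt]] := taller_witness B_ge2 g0_height.
have g1_lt := leq_ltn_trans (g1_min y y_height) y_lt.
apply: leq_trans (HB_le B_ge2 g1_lt) _.
by rewrite mulnDl leq_add2r leq_divM.
Qed.
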